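(* Let $n$ be the number of validators and $f\in[0,n]$, and allow checkpoints to be finalized also via acknowledgment messages. If two conflicting chains are finalized according to any two respective views, then at least $\frac{n}{3}$ validators can be detected (from the messages in those views) to have violated either $\mathbf{E_1}$, $\mathbf{E_2}$, or $\mathbf{E_3}$.
   Context: Chains are identified with their last block (a block is $(b,p)$ with $p$ its slot, genesis $B_{\text{genesis}}$ has slot $-1$); $\chi.p$ is the slot of the last block; $\preceq$ is the prefix relation; chains conflict if neither is a prefix of the other. A view is a set of messages. Checkpoints $\mathcal{C}=(\chi,c)$. An FFG-vote $\mathcal{C}_1\to\mathcal{C}_2$ (carried in VOTE messages) is valid iff $\mathcal{C}_1.c<\mathcal{C}_2.c$ and $\mathcal{C}_1.\chi\preceq\mathcal{C}_2.\chi$. In a view $\mathcal{V}$: $\mathcal{C}$ is justified iff $\mathcal{C}=(B_{\text{genesis}},0)$ or there are VOTE messages in $\mathcal{V}$ from at least $\frac{2}{3}n$ distinct validators with valid FFG-votes $\mathcal{S}\to\mathcal{T}$, $\mathcal{S}$ justified in $\mathcal{V}$, $\mathcal{S}.\chi\preceq\mathcal{C}.\chi\preceq\mathcal{T}.\chi$, $\mathcal{T}.c=\mathcal{C}.c$. $\mathcal{C}$ is finalized iff (i) $\mathcal{C}=(B_{\text{genesis}},0)$, or (ii) $\mathcal{C}$ is justified and there are VOTE messages from at least $\frac{2}{3}n$ distinct validators with valid FFG-votes $\mathcal{C}\to\mathcal{T}$, $\mathcal{T}.c=\mathcal{C}.c+1$, or (iii) (finalization via acknowledgments) $\mathcal{C}$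 is justified and $\mathcal{V}$ contains acknowledgment messages $[\textsc{ack},\mathcal{C},t,v_i]$ (where $\mathcal{C}.c=t$) from at least $\frac{2}{3}n$ distinct validators. A chain is finalized according to $\mathcal{V}$ iff it is a prefix of the chain of a checkpoint finalized in $\mathcal{V}$. Preorder: $\mathcal{C}\le\mathcal{C}'$ iff $\mathcal{C}.c<\mathcal{C}'.c$ or ($\mathcal{C}.c=\mathcal{C}'.c$ and $\mathcal{C}.\chi.p\le\mathcal{C}'.\chi.p$); $<$ its strict part. Slashing conditions: for two distinct FFG-votes $\mathcal{C}_1\to\mathcal{C}_2$, $\mathcal{C}_3\to\mathcal{C}_4$ sent by the same validator, $\mathbf{E_1}$: $\mathcal{C}_2.c=\mathcal{C}_4.c$; $\mathbf{E_2}$: $\mathcal{C}_3<\mathcal{C}_1$ and $\mathcal{C}_2.c<\mathcal{C}_4.c$. $\mathbf{E_3}$: a validator has sent an FFG-vote $\mathcal{C}_1\to\mathcal{C}_2$ and an acknowledgment for $\mathcal{C}_a$ with $\mathcal{C}_1<\mathcal{C}_a$ and $\mathcal{C}_a.c<\mathcal{C}_2.c$. *)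

From mathcomp Require Import all_boot all_order all_algebra.
Set Implicit Arguments.
Unset Strict Implicit.
Unset Printing Implicit Defensive.

Section Model.

(* B : type of block payloads; n : number of validators (validators = 'I_n). *)
Variable B : Type.
Variable n : nat.

(* A block is (b, p) with p its slot (p >= 0 for non-genesis blocks).
   A chain is the sequence of its non-genesis blocks, from genesis onwards
   (the genesis block B_genesis, slot -1, is implicit); slots are strictly
   increasing along a chain. *)
Definition block := (B * nat)%type.
Definition chain := { s : seq block | sorted ltn (map snd s) }.

Definition genesis_chain : chain := exist _ [::] isT.

Definition chain_slot (ch : chain) : int :=
  match rev (val ch) with
  | [::] => (- 1)%R
  | bl :: _ => Posz bl.2
  end.

Definition prefix (ch1 ch2 : chain) : Prop :=
  exists s, val ch2 = val ch1 ++ s.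

Definition conflicting (ch1 ch2 : chain) : Prop :=
  ~ prefix ch1 ch2 /\ ~ prefix ch2 ch1.

Record checkpoint := Checkpoint { cp_chain : chain; cp_c : nat }.

Definition genesis_cp : checkpoint := Checkpoint genesis_chain 0.

Inductive message :=
  | Vote (v : 'I_n) (slot : nat) (head : chain) (src tgt : checkpoint)
  | Ack (v : 'I_n) (C : checkpoint) (t : nat).

Definition view := message -> Prop.

Definition view_union (V1 V2 : view) : view := fun m => V1 m \/ V2 m.

Definition valid_ffg (C1 C2 : checkpoint) : Prop :=
  (cp_c C1 < cp_c C2)%N /\ prefix (cp_chain C1) (cp_chain C2).

Definition supermajority (Q : {set 'I_n}) : Prop := (2 * n <= 3 * #|Q|)%N.

Inductive justified (V : view) : checkpoint -> Prop :=
  | justified_genesis : justified V genesis_cp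
  | justified_votes (C : checkpoint) :
      (exists Q : {set 'I_n}, supermajority Q /\
         forall v, v \in Q ->
           exists (s : nat) (hd : chain) (S T : checkpoint),
             V (Vote v s hd S T) /\ valid_ffg S T /\ justified V S /\
             prefix (cp_chain S) (cp_chain C) /\
             prefix (cp_chain C) (cp_chain T) /\
             cp_c T = cp_c C) ->
      justified V C.

Definition finalized (V : view) (C : checkpoint) : Prop :=
  C = genesis_cp
  \/ (justified V C /\
      exists Q : {set 'I_n}, supermajority Q /\
        forall v, v \in Q ->
          exists (s : nat) (hd : chain) (T : checkpoint),
            V (Vote v s hd C T) /\ valid_ffg C T /\ cp_c T = (cp_c C).+1)
  \/ (justified V C /\
      exists Q : {set 'I_n}, supermajority Q /\
        forall v, v \in Q -> V (Ack v C (cp_c C))).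

Definition chain_finalized (V : view) (ch : chain) : Prop :=
  exists C, finalized V C /\ prefix ch (cp_chain C).

Definition cp_le (C C' : checkpoint) : Prop :=
  (cp_c C < cp_c C')%N \/
  (cp_c C = cp_c C' /\ (chain_slot (cp_chain C) <= chain_slot (cp_chain C'))%R).

Definition cp_lt (C C' : checkpoint) : Prop := cp_le C C' /\ ~ cp_le C' C.

Definition sent_ffg (V : view) (v : 'I_n) (C1 C2 : checkpoint) : Prop :=
  exists (s : nat) (hd : chain), V (Vote v s hd C1 C2).

Definition sent_ack (V : view) (v : 'I_n) (Ca : checkpoint) : Prop :=
  exists t : nat, V (Ack v Ca t).

Definition violates_E1 (V : view) (v : 'I_n) : Prop :=
  exists C1 C2 C3 C4, sent_ffg V v C1 C2 /\ sent_ffg V v C3 C4 /\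
    (C1, C2) <> (C3, C4) /\ cp_c C2 = cp_c C4.

Definition violates_E2 (V : view) (v : 'I_n) : Prop :=
  exists C1 C2 C3 C4, sent_ffg V v C1 C2 /\ sent_ffg V v C3 C4 /\
    (C1, C2) <> (C3, C4) /\ cp_lt C3 C1 /\ (cp_c C2 < cp_c C4)%N.

Definition violates_E3 (V : view) (v : 'I_n) : Prop :=
  exists C1 C2 Ca, sent_ffg V v C1 C2 /\ sent_ack V v Ca /\
    cp_lt C1 Ca /\ (cp_c Ca < cp_c C2)%N.

Definition slashable (V : view) (v : 'I_n) : Prop :=
  violates_E1 V v \/ violates_E2 V v \/ violates_E3 V v.

End Model.

From mathcomp Require Import all_boot all_order all_algebra.
From mathcomp Require Import zify.
From Stdlib Require Import Classical.

(* Let F1 and F2 be finalized checkpoints on the two conflicting chains, say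
   F1 <= F2.  Walk back from F2 along sources of the votes justifying it, by
   induction on the epoch, as long as the source stays >= F1; such sources
   never extend F1.  If the walk reaches the epoch of F1, two conflicting
   checkpoints of that epoch are justified, and every validator voting for
   both violates E1.  Otherwise the current checkpoint C is justified by votes
   whose sources all lie strictly below F1 and whose targets lie in the epoch
   of C, above that of F1: they surround the finalization of F1, so each of
   these voters that also finalized F1 violates E1 or E2 (finalizing vote) or
   E3 (acknowledgment).  In both cases the culprits form the intersection of
   two supermajorities, which has at least n/3 members. *)

Set Implicit Arguments.
Unset Strict Implicit.
Unset Printing Implicit Defensive.

Import Order.TTheory.

Section Chains.
Variable B : Type.
Implicit Types a b c : chain B.

Lemma prefix_trans a b c : prefix a b -> prefix b c -> prefix a c.
Proof. by move=> [s Hb] [t Hc]; exists (s ++ t); rewrite Hc Hb catA. Qed.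

Lemma genesis_prefix a : prefix (genesis_chain B) a.
Proof. by exists (val a). Qed.

Lemma prefix_total a b c : prefix a c -> prefix b c -> prefix a b \/ prefix b a.
Proof.
move=> [s Hc] [t]; rewrite Hc /prefix.
elim: (val a) (val b) => [|x sa IH] [|y sb] /=.
- by left; exists [::].
- by left; exists (y :: sb).
- by right; exists (x :: sa).
- by case=> -> /IH [] [u ->]; [left|right]; exists u.
Qed.

Lemma conflicting_extensions a b a' b' :
  conflicting a b -> prefix a a' -> prefix b b' -> conflicting a' b'.
Proof.
move=> [nab nba] aa' bb'; split=> [a'b'|b'a'].
- by case: (prefix_total (prefix_trans aa' a'b') bb').
- by case: (prefix_total aa' (prefix_trans bb' b'a')).
Qed.

Lemma prefix_slot_lt a b :
  prefix a b -> val a <> val b -> (chain_slot a < chain_slot b)%R.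
Proof.
move=> [s eq_b] neq_ab; have := valP b.
rewrite /chain_slot eq_b in neq_ab *; clear eq_b.
case/lastP: s neq_ab => [|s y]; first by rewrite cats0.
rewrite -rcons_cat rev_rcons => _.
case/lastP: (val a) => [|sa x] //; rewrite rev_rcons ltz_nat.
rewrite sorted_pairwise; last exact: ltn_trans.
rewrite -cats1 -catA map_cat pairwise_cat => /and3P[/allrelP lt_xy _ _].
by apply: lt_xy; rewrite ?map_rcons ?map_cat ?mem_cat ?mem_rcons ?inE eqxx ?orbT.
Qed.

Lemma slot_le_prefix a b :
  prefix b a -> (chain_slot a <= chain_slot b)%R -> prefix a b.
Proof.
move=> ba le_ab; have [eq_ab|neq_ab] := classic (val b = val a).
  by exists [::]; rewrite eq_ab cats0.
by have := lt_le_trans (prefix_slot_lt ba neq_ab) le_ab; rewrite ltxx.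
Qed.

End Chains.

Section Checkpoints.
Variable B : Type.
Implicit Types C D : checkpoint B.

Lemma cp_le_total C D : cp_le C D \/ cp_lt D C.
Proof.
rewrite /cp_lt /cp_le; have [lt_CD|gt_CD|eq_CD] := ltngtP (cp_c C) (cp_c D).
- by left; left.
- by right; split; [left | case=> [|[]]; lia].
have [le_slot|gt_slot] := leP (chain_slot (cp_chain C)) (chain_slot (cp_chain D)).
  by left; right.
right; split; first by right; split; last exact: ltW.
by case=> [|[]]; lia.
Qed.

Lemma cp_le_epoch C D : cp_le C D -> cp_c C <= cp_c D.
Proof. by case=> [/ltnW | [->]]. Qed.

Lemma cp_le_same_epoch_prefix C D :
  cp_le C D -> cp_c C = cp_c D -> prefix (cp_chain D) (cp_chain C) ->
  prefix (cp_chain C) (cp_chain D).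
Proof.
move=> [lt_CD|[_ le_slot]] eq_CD DC; first by move: lt_CD; rewrite eq_CD ltnn.
exact: slot_le_prefix.
Qed.

End Checkpoints.

Section Views.
Variables (B : Type) (n : nat).
Implicit Types (V W : view B n) (C F S T : checkpoint B) (Q : {set 'I_n}).

Definition third_slashable V : Prop :=
  exists Q, (n <= 3 * #|Q|)%N /\ forall v, v \in Q -> slashable V v.

Definition finality_vote V v F : Prop :=
  (exists T, sent_ffg V v F T /\ cp_c T = (cp_c F).+1) \/ sent_ack V v F.

Lemma supermajority_meet Q1 Q2 :
  supermajority Q1 -> supermajority Q2 -> (n <= 3 * #|Q1 :&: Q2|)%N.
Proof.
rewrite /supermajority => Q1_big Q2_big.
have := cardsUI Q1 Q2; have := max_card (Q1 :|: Q2); rewrite card_ord; lia.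
Qed.

Lemma third_slashable_of_quorums V Q1 Q2 :
  supermajority Q1 -> supermajority Q2 ->
  (forall v, v \in Q1 -> v \in Q2 -> slashable V v) -> third_slashable V.
Proof.
move=> Q1_big Q2_big slash; exists (Q1 :&: Q2); split; first exact: supermajority_meet.
by move=> v /setIP[]; apply: slash.
Qed.

Lemma justified_mono V W :
  (forall m, V m -> W m) -> forall C, justified V C -> justified W C.
Proof.
move=> VW C; move Ek: (cp_c C) => k; elim/ltn_ind: k C Ek => k IH C Ek jC.
case: jC Ek => [|{}C [Q [Q_big votes]]] Ek; first exact: justified_genesis.
apply: justified_votes; exists Q; split=> // v /votes.
move=> [s [hd [S [T [VST [[lt_ST ST] [jS [SC [CT eq_TC]]]]]]]]].
exists s, hd, S, T; do !split=> //; first exact: VW.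
by apply: (IH (cp_c S)) => //; rewrite -Ek -eq_TC.
Qed.

Lemma finalized_mono V W :
  (forall m, V m -> W m) -> forall F, finalized V F -> finalized W F.
Proof.
move=> VW F [->|[[jF [Q [Q_big votes]]]|[jF [Q [Q_big acks]]]]]; first by left.
- right; left; split; first exact: justified_mono jF.
  exists Q; split=> // v /votes[s [hd [T [VFT FT]]]].
  by exists s, hd, T; split; first exact: VW.
- right; right; split; first exact: justified_mono jF.
  by exists Q; split=> // v /acks; apply: VW.
Qed.

Lemma finalized_justified V F : finalized V F -> justified V F.
Proof. by case=> [->|[[]|[]]] //; apply: justified_genesis. Qed.

Lemma finalized_quorum V F :
  finalized V F -> F = genesis_cp B \/
  exists Q, supermajority Q /\ forall v, v \in Q -> finality_vote V v F.
Proof.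
case=> [|[[_ [Q [Q_big votes]]]|[_ [Q [Q_big acks]]]]]; [by left|right..].
- exists Q; split=> // v /votes[s [hd [T [VFT [_ FT]]]]].
  by left; exists T; split; first by exists s, hd.
- by exists Q; split=> // v /acks VF; right; exists (cp_c F).
Qed.

Lemma violates_E1_of_conflicting_targets V v S1 T1 S2 T2 (a b : chain B) :
  sent_ffg V v S1 T1 -> sent_ffg V v S2 T2 -> cp_c T1 = cp_c T2 ->
  prefix a (cp_chain T1) -> prefix b (cp_chain T2) -> conflicting a b ->
  violates_E1 V v.
Proof.
move=> ST1 ST2 eq_T aT1 bT2 [nab nba]; exists S1, T1, S2, T2.
split=> //; split=> //; split=> // - [_ eq_T12].
by rewrite -eq_T12 in bT2; case: (prefix_total aT1 bT2).
Qed.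

Lemma slashable_of_surrounding_vote V v F S T :
  finality_vote V v F -> sent_ffg V v S T -> cp_lt S F ->
  (cp_c F < cp_c T)%N -> slashable V v.
Proof.
move=> [[T1 [FT1 eq_T1]]|ackF] ST lt_SF lt_FT; last by right; right; exists S, T, F.
have neq_votes : (F, T1) <> (S, T) by case=> eq_FS _; case: lt_SF; rewrite eq_FS.
have [lt_T|eq_T] : (cp_c T1 < cp_c T)%N \/ cp_c T1 = cp_c T by lia.
- by right; left; exists F, T1, S, T.
- by left; exists F, T1, S, T.
Qed.

Lemma third_slashable_of_same_epoch V F C :
  justified V F -> justified V C -> cp_c F = cp_c C ->
  conflicting (cp_chain F) (cp_chain C) -> third_slashable V.
Proof.
case=> [|{}F [QF [QF_big votesF]]] jC eq_FC conf.
  by case: conf.1; apply: genesis_prefix.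
case: jC eq_FC conf => [|{}C [QC [QC_big votesC]]] eq_FC conf.
  by case: conf.2; apply: genesis_prefix.
apply: (third_slashable_of_quorums QF_big QC_big) => v.
move=> /votesF[s1 [hd1 [S1 [T1 [VST1 [_ [_ [_ [FT1 eq_T1]]]]]]]]].
move=> /votesC[s2 [hd2 [S2 [T2 [VST2 [_ [_ [_ [CT2 eq_T2]]]]]]]]].
left; apply: (violates_E1_of_conflicting_targets (S1 := S1) (S2 := S2) _ _ _ FT1 CT2 conf).
- by exists s1, hd1.
- by exists s2, hd2.
- by rewrite eq_T1 eq_T2.
Qed.

Lemma third_slashable_of_finalized_below V F C :
  finalized V F -> justified V C -> cp_le F C ->
  ~ prefix (cp_chain F) (cp_chain C) -> third_slashable V.
Proof.
move=> finF; have jF := finalized_justified finF.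
case: (finalized_quorum finF) => [-> _ _ []|[Q1 [Q1_big finQ1]]].
  exact: genesis_prefix.
move Ek: (cp_c C) => k; elim/ltn_ind: k C Ek => k IH C Ek jC le_FC nFC.
have := cp_le_epoch le_FC; rewrite Ek leq_eqVlt => /orP[/eqP eq_Fk|lt_Fk].
  apply: (third_slashable_of_same_epoch jF jC); first by rewrite Ek.
  by split=> // CF; apply/nFC/cp_le_same_epoch_prefix; rewrite ?Ek.
case: jC Ek le_FC nFC => [|{}C [QC [QC_big votesC]]] Ek le_FC nFC.
  by move: lt_Fk; rewrite -Ek.
(* A source S with F <= S does not extend F (it is a prefix of C), so the
   induction hypothesis applies to it; every other source lies strictly below F,
   and then the vote surrounds the finalization of F. *)
case: (classic (third_slashable V)) => [//|not_slash].
apply: (third_slashable_of_quorums Q1_big QC_big) => v /finQ1 fin_v.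
move=> /votesC[s [hd [S [T [VST [[lt_ST _] [jS [SC [_ eq_T]]]]]]]]].
apply: (slashable_of_surrounding_vote fin_v (S := S) (T := T)).
- by exists s, hd.
- case: (cp_le_total F S) => // le_FS; case: not_slash.
  apply: (IH (cp_c S)) => //; first by rewrite -Ek -eq_T.
  by move=> FS; apply/nFC/(prefix_trans FS SC).
- by rewrite eq_T Ek.
Qed.

End Views.

Theorem lemmaB1 (B : Type) (n f : nat) (Hf : (f <= n)%N)
    (V1 V2 : view B n) (ch1 ch2 : chain B) :
  conflicting ch1 ch2 ->
  chain_finalized V1 ch1 ->
  chain_finalized V2 ch2 ->
  exists Q : {set 'I_n},
    (n <= 3 * #|Q|)%N /\
    forall v, v \in Q -> slashable (view_union V1 V2) v.
Proof.
move=> conf [F1 [finF1 ch1F1]] [F2 [finF2 ch2F2]].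
have [[nF12 nF21] finW1 finW2] :
    [/\ conflicting (cp_chain F1) (cp_chain F2),
        finalized (view_union V1 V2) F1 & finalized (view_union V1 V2) F2].
  split; first exact: conflicting_extensions conf ch1F1 ch2F2.
  - by apply: finalized_mono finF1 => m; left.
  - by apply: finalized_mono finF2 => m; right.
case: (cp_le_total F1 F2) => [le12|[le21 _]].
- exact: third_slashable_of_finalized_below finW1 (finalized_justified finW2) le12 nF12.
- exact: third_slashable_of_finalized_below finW2 (finalized_justified finW1) le21 nF21.
Qed.
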